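(* Let $g:\mathbb{R}\to\mathbb{R}$ be a univariate ReLU network whose weights and biases are rational numbers, let $x,\epsilon\in\mathbb{Q}$ with $\epsilon\ge 0$, and let $m$ be the number of weights and biases of $g$ and $d$ the maximal bit length of any of them (and of $x,\epsilon$). Then $\min_{t\in[x-\epsilon,x+\epsilon]}g(t)$ is attained and is a rational number whose bit length is $O(m\cdot d)$, i.e., bounded linearly in the encoding size of $g$.
   Context: A univariate ReLU network $g:\mathbb{R}\to\mathbb{R}$ is a composition of layers $h\mapsto\mathrm{ReLU}(W_k h+b_k)$, $k=1,\dots,\kappa$, with rational weight matrices $W_k$ and bias vectors $b_k$ encoded in binary, input and output dimension 1, and $\mathrm{ReLU}(t)=\max(0,t)$ applied coordinatewise. The bit length of a rational $p/q$ (in lowest terms) is the number of bits needed to write $p$ and $q$ in binary. *)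

From mathcomp Require Import all_boot all_order all_algebra.
From mathcomp Require Import reals.
Set Implicit Arguments. Unset Strict Implicit. Unset Printing Implicit Defensive.
Import Order.TTheory GRing.Theory Num.Theory.
Local Open Scope ring_scope.

(* Number of binary digits of a natural number (0 is written with 1 digit). *)
Definition bitlen_nat (n : nat) : nat := (trunc_log 2 n).+1.

(* Bit length of a rational p/q in lowest terms (mathcomp rationals are
   always stored in lowest terms with q > 0): bits of |p| plus bits of q. *)
Definition bitlen_rat (r : rat) : nat :=
  (bitlen_nat `|numq r|%N + bitlen_nat `|denq r|%N)%N.

(* A layer h |-> ReLU(W h + b): W given as the list of its rows, b as a list. *)
Definition layer := (seq (seq rat) * seq rat)%type.

(* A (univariate) ReLU network: the list of its layers, applied first to last. *)
Definition relu_net := seq layer.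

Definition wf_layer (nin nout : nat) (L : layer) : bool :=
  [&& size L.1 == nout, all (fun row => size row == nin) L.1 & size L.2 == nout].

Fixpoint wf_from (nin : nat) (N : relu_net) : bool :=
  match N with
  | [::] => nin == 1%N
  | L :: N' => wf_layer nin (size L.2) L && wf_from (size L.2) N'
  end.

Definition wf_net (N : relu_net) : bool := (N != [::]) && wf_from 1 N.

Definition relu (R : realType) (t : R) : R := Num.max 0 t.

Definition apply_layer (R : realType) (L : layer) (h : seq R) : seq R :=
  [seq relu (\sum_(j < size rb.1) ratr (nth 0 rb.1 j) * nth 0 h j + ratr rb.2)
  | rb <- zip L.1 L.2].

Definition net_eval (R : realType) (N : relu_net) (t : R) : R :=
  head 0 (foldl (fun h L => apply_layer L h) [:: t] N).

Definition params (N : relu_net) : seq rat :=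
  flatten [seq flatten L.1 ++ L.2 | L <- N].

Definition num_params (N : relu_net) : nat := size (params N).

Definition max_bits (N : relu_net) (x eps : rat) : nat :=
  \max_(r <- x :: eps :: params N) bitlen_rat r.

From mathcomp Require Import all_boot all_order all_algebra.
From mathcomp Require Import reals ring lra zify.
Import Order.TTheory GRing.Theory Num.Theory.
Local Open Scope ring_scope.
Set Implicit Arguments. Unset Strict Implicit.

(** The network is piecewise affine in its input [t]: fixing which neurons are
    active turns every neuron, and the output, into an affine function of [t],
    valid on the interval where the active preactivations are nonnegative and
    the inactive ones nonpositive. Such an interval is cut out by roots of
    these preactivations, so on [[a, b]] the minimum is attained at [a], [b]
    or at one of these roots. Every affine function arising this way has
    coefficients with denominator dividing the product [D] of all weight
    denominators and absolute value at most the product [B] of all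
    [1 + |w|]; both are below [2 ^ (m d)], so the minimum is a quotient of
    integers of size [2 ^ O(m d)]. *)

Lemma seq_argmin (I : eqType) d (T : orderType d) (F : I -> T) (s : seq I) :
  s != [::] -> exists2 c, c \in s & forall c', c' \in s -> (F c <= F c')%O.
Proof.
elim: s => [|y [|z s] IH] // _.
  by exists y; rewrite ?mem_head // => c'; rewrite inE => /eqP ->.
have [c cin c_min] := IH isT.
have [Fyc|Fcy] := leP (F y) (F c).
  exists y; first exact: mem_head.
  by move=> c'; rewrite inE => /predU1P [-> // | /c_min]; apply: le_trans.
exists c; first by rewrite inE cin orbT.
by move=> c'; rewrite inE => /predU1P [-> | /c_min //]; apply: ltW.
Qed.

Lemma mem_zip (S T : eqType) (s : seq S) (t : seq T) x y :
  (x, y) \in zip s t -> x \in s /\ y \in t.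
Proof.
elim: s t => [|a s IH] [|b t] //=; rewrite inE => /predU1P [[-> ->]|/IH [xs yt]].
  by split; apply: mem_head.
by split; rewrite ?inE ?xs ?yt orbT.
Qed.

Lemma prodr_ge1 (R : numDomainType) (I : Type) (s : seq I) (F : I -> R) :
  (forall i, 1 <= F i) -> 1 <= \prod_(i <- s) F i.
Proof. by move=> F1; apply: (big_ind (fun x => 1 <= x)) => // x y; apply: mulr_ege1. Qed.

Lemma prodr_le_exp (R : numDomainType) (I : eqType) (s : seq I) (F : I -> R) c :
  (forall i, i \in s -> 0 <= F i <= c) -> \prod_(i <- s) F i <= c ^+ size s.
Proof.
elim: s => [|i s IH] F_le; first by rewrite big_nil.
have /andP [F0 Fc] := F_le i (mem_head i s).
have F_le' j : j \in s -> 0 <= F j <= c by move=> js; apply: F_le; rewrite inE js orbT.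
rewrite big_cons exprS ler_pM ?IH // big_seq prodr_ge0 // => j /F_le'.
by case/andP.
Qed.

(** * Affine functions *)

Definition aff := (rat * rat)%type.

Definition aff_opp (f : aff) : aff := (- f.1, - f.2).

Definition aff_root (f : aff) : rat := - f.2 / f.1.

Section AffineFunctions.

Variable R : numFieldType.
Implicit Types (f g : aff) (s t : R) (cs : seq aff).

Definition aff_eval t f : R := ratr f.1 * t + ratr f.2.

Definition nonneg_at t cs : bool := all (fun f => 0 <= aff_eval t f) cs.

Lemma aff_eval0 t : aff_eval t (0, 0) = 0.
Proof. by rewrite /aff_eval /= !rmorph0 mul0r addr0. Qed.

Lemma aff_evalN f t : aff_eval t (aff_opp f) = - aff_eval t f.
Proof. by rewrite /aff_eval /= !rmorphN mulNr opprD. Qed.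

Lemma aff_eval_nondecr f s t : 0 <= f.1 -> s <= t -> aff_eval s f <= aff_eval t f.
Proof. by move=> f0 st; rewrite /aff_eval lerD2r ler_wpM2l // ler0q. Qed.

Lemma aff_eval_nonincr f s t : f.1 <= 0 -> s <= t -> aff_eval t f <= aff_eval s f.
Proof. by move=> f0 st; rewrite /aff_eval lerD2r ler_wnM2l // lerq0. Qed.

Lemma aff_eval_factor f t : f.1 != 0 ->
  aff_eval t f = ratr f.1 * (t - ratr (aff_root f)).
Proof.
move=> f0; have f0' : (ratr f.1 : R) != 0 by rewrite fmorph_eq0.
by rewrite /aff_eval /aff_root fmorph_div rmorphN /=; field.
Qed.

Lemma aff_eval_root f : f.1 != 0 -> aff_eval (ratr (aff_root f)) f = 0.
Proof. by move=> f0; rewrite aff_eval_factor // subrr mulr0. Qed.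

Lemma aff_root_le f t : 0 < f.1 -> 0 <= aff_eval t f -> ratr (aff_root f) <= t.
Proof. by move=> f0; rewrite aff_eval_factor ?gt_eqF // pmulr_rge0 ?ltr0q // subr_ge0. Qed.

Lemma le_aff_root f t : f.1 < 0 -> 0 <= aff_eval t f -> t <= ratr (aff_root f).
Proof. by move=> f0; rewrite aff_eval_factor ?lt_eqF // nmulr_rge0 ?ltrq0 // subr_le0. Qed.

(** If the constraints [cs] hold somewhere in [[a, b]], the set of points of
    [[a, b]] where they all hold is [[lower_end a cs, upper_end b cs]]. *)
Definition lower_end (a : rat) cs : rat :=
  \big[Num.max/a]_(g <- cs | 0 < g.1) aff_root g.

Definition upper_end (b : rat) cs : rat :=
  \big[Num.min/b]_(g <- cs | g.1 < 0) aff_root g.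

Lemma lower_end_le a cs t :
  ratr a <= t -> nonneg_at t cs -> ratr (lower_end a cs) <= t.
Proof.
move=> a_t /allP cs_t; rewrite /lower_end big_seq_cond.
apply: (big_ind (fun c : rat => ratr c <= t)) => // [u v ut vt|g /andP [gcs g0]].
  by rewrite maxEle; case: ifP.
exact: aff_root_le g0 (cs_t g gcs).
Qed.

Lemma le_upper_end b cs t :
  t <= ratr b -> nonneg_at t cs -> t <= ratr (upper_end b cs).
Proof.
move=> tb /allP cs_t; rewrite /upper_end big_seq_cond.
apply: (big_ind (fun c : rat => t <= ratr c)) => // [u v ut vt|g /andP [gcs g0]].
  by rewrite minEle; case: ifP.
exact: le_aff_root g0 (cs_t g gcs).
Qed.

Lemma nonneg_at_lower_end a cs t :
  ratr a <= t -> nonneg_at t cs -> nonneg_at (ratr (lower_end a cs)) cs.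
Proof.
move=> a_t cs_t; have lo_t := lower_end_le a_t cs_t.
apply/allP => g gcs; have g_t := allP cs_t g gcs.
have [g0|g0] := lerP g.1 0; first exact: le_trans g_t (aff_eval_nonincr g0 lo_t).
rewrite -(aff_eval_root (lt0r_neq0 g0)) aff_eval_nondecr ?(ltW g0) // ler_rat.
exact: le_bigmax_seq.
Qed.

Lemma nonneg_at_upper_end b cs t :
  t <= ratr b -> nonneg_at t cs -> nonneg_at (ratr (upper_end b cs)) cs.
Proof.
move=> tb cs_t; have t_up := le_upper_end tb cs_t.
apply/allP => g gcs; have g_t := allP cs_t g gcs.
have [g0|g0] := lerP 0 g.1; first exact: le_trans g_t (aff_eval_nondecr g0 t_up).
rewrite -(aff_eval_root (ltr0_neq0 g0)) aff_eval_nonincr ?(ltW g0) // ler_rat.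
exact: ge_bigmin_seq.
Qed.

Lemma lower_end_mem a cs :
  lower_end a cs \in a :: [seq aff_root g | g <- cs & g.1 != 0].
Proof.
rewrite /lower_end big_seq_cond.
apply: (big_ind (fun c => c \in a :: [seq aff_root g | g <- cs & g.1 != 0])).
- exact: mem_head.
- by move=> u v; rewrite maxEle; case: ifP.
by move=> g /andP [gcs g0]; rewrite inE map_f ?orbT // mem_filter lt0r_neq0.
Qed.

Lemma upper_end_mem b cs :
  upper_end b cs \in b :: [seq aff_root g | g <- cs & g.1 != 0].
Proof.
rewrite /upper_end big_seq_cond.
apply: (big_ind (fun c => c \in b :: [seq aff_root g | g <- cs & g.1 != 0])).
- exact: mem_head.
- by move=> u v; rewrite minEle; case: ifP.
by move=> g /andP [gcs g0]; rewrite inE map_f ?orbT // mem_filter ltr0_neq0.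
Qed.

Lemma aff_eval_end_le a b cs f t : ratr a <= t <= ratr b -> nonneg_at t cs ->
  exists2 c, c \in [:: lower_end a cs; upper_end b cs] &
    [/\ a <= c <= b, nonneg_at (ratr c) cs & aff_eval (ratr c) f <= aff_eval t f].
Proof.
move=> /andP [a_t tb] cs_t.
have lo_t := lower_end_le a_t cs_t; have t_up := le_upper_end tb cs_t.
have a_lo : a <= lower_end a cs by exact: bigmax_ge_id.
have up_b : upper_end b cs <= b by exact: bigmin_le_id.
have [f0|f0] := lerP 0 f.1.
  exists (lower_end a cs); first exact: mem_head.
  split; first by rewrite a_lo -(ler_rat R) (le_trans lo_t).
    exact: nonneg_at_lower_end a_t cs_t.
  exact: aff_eval_nondecr f0 lo_t.
exists (upper_end b cs); first by rewrite !inE eqxx orbT.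
split; first by rewrite up_b andbT -(ler_rat R) (le_trans _ t_up).
  exact: nonneg_at_upper_end tb cs_t.
exact: aff_eval_nonincr (ltW f0) t_up.
Qed.

End AffineFunctions.

(** * Activation patterns *)

Definition preact (row : seq rat) (b : rat) (h : seq aff) : aff :=
  (\sum_(j < size row) nth 0 row j * (nth (0, 0) h j).1,
   \sum_(j < size row) nth 0 row j * (nth (0, 0) h j).2 + b).

Definition layer_preacts (L : layer) (h : seq aff) : seq aff :=
  [seq preact rb.1 rb.2 h | rb <- zip L.1 L.2].

(** A pair [(cs, out)] fixes for each preactivation [z] whether its neuron is
    active, recording the constraint ([z] or [-z] nonnegative) in [cs] and
    the resulting output ([z] or [0]) in [out]. *)
Fixpoint act_patterns (zs : seq aff) : seq (seq aff * seq aff) :=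
  match zs with
  | [::] => [:: ([::], [::])]
  | z :: zs' =>
      [seq (z :: co.1, z :: co.2) | co <- act_patterns zs'] ++
      [seq (aff_opp z :: co.1, (0, 0) :: co.2) | co <- act_patterns zs']
  end.

Fixpoint net_branches (N : relu_net) (h : seq aff) : seq (seq aff * seq aff) :=
  match N with
  | [::] => [:: ([::], h)]
  | L :: N' => flatten [seq [seq (co.1 ++ bo.1, bo.2) | bo <- net_branches N' co.2]
                       | co <- act_patterns (layer_preacts L h)]
  end.

Section Branches.

Variable R : realType.
Implicit Types (t : R) (h zs : seq aff) (N : relu_net).

Lemma aff_eval_preact t row b h :
  aff_eval t (preact row b h) =
  \sum_(j < size row) ratr (nth 0 row j) * nth 0 (map (aff_eval t) h) j + ratr b.
Proof.
rewrite /aff_eval /= rmorphD !rmorph_sum mulr_suml addrA -big_split /=.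
congr (_ + _); apply: eq_bigr => j _.
have [jh|hj] := ltnP j (size h).
  by rewrite (nth_map (0, 0)) // /aff_eval !rmorphM /= mulrDr mulrA.
rewrite [nth (0, 0) h j]nth_default // [nth 0 (map _ _) j]nth_default ?size_map //=.
by rewrite !mulr0 !rmorph0 mul0r addr0.
Qed.

Lemma apply_layer_preacts t L h :
  apply_layer L (map (aff_eval t) h) =
  map (fun z => relu (aff_eval t z)) (layer_preacts L h).
Proof.
rewrite /apply_layer /layer_preacts -map_comp.
by apply: eq_map => -[row b] /=; rewrite aff_eval_preact.
Qed.

Lemma act_patterns_sound t zs co : co \in act_patterns zs -> nonneg_at t co.1 ->
  map (aff_eval t) co.2 = map (fun z => relu (aff_eval t z)) zs.
Proof.
elim: zs co => [|z zs IH] co /=; first by rewrite inE => /eqP ->.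
rewrite mem_cat => /orP [] /mapP [c cin ->] /= /andP [z_t c_t];
  rewrite (IH c cin c_t) /relu.
  by rewrite max_r.
by rewrite aff_eval0 max_l // -oppr_ge0 -aff_evalN.
Qed.

Lemma act_patterns_complete t zs :
  exists2 co, co \in act_patterns zs & nonneg_at t co.1.
Proof.
elim: zs => [|z zs [c cin c_t]] /=; first by exists ([::], [::]); rewrite ?inE.
have [z_t|z_t] := lerP 0 (aff_eval t z).
  exists (z :: c.1, z :: c.2); first by rewrite mem_cat map_f.
  by rewrite /nonneg_at /= z_t.
exists (aff_opp z :: c.1, (0, 0) :: c.2).
  by rewrite mem_cat (map_f (fun co => (aff_opp z :: co.1, (0, 0) :: co.2))) ?orbT.
by rewrite /nonneg_at /= aff_evalN oppr_ge0 ltW.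
Qed.

Lemma net_branches_sound t N h co : co \in net_branches N h -> nonneg_at t co.1 ->
  foldl (fun v L => apply_layer L v) (map (aff_eval t) h) N =
  map (aff_eval t) co.2.
Proof.
elim: N h co => [|L N IH] h co /=; first by rewrite inE => /eqP ->.
case/flattenP => s /mapP [c cin ->] /mapP [b bin ->] /=.
rewrite /nonneg_at all_cat => /andP [c_t b_t].
by rewrite apply_layer_preacts -(act_patterns_sound cin c_t) (IH _ _ bin b_t).
Qed.

Lemma net_branches_complete t N h :
  exists2 co, co \in net_branches N h & nonneg_at t co.1.
Proof.
elim: N h => [|L N IH] h /=; first by exists ([::], h); rewrite ?inE.
have [c cin c_t] := act_patterns_complete t (layer_preacts L h).
have [b bin b_t] := IH c.2.
exists (c.1 ++ b.1, b.2); last by rewrite /nonneg_at all_cat; apply/andP.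
apply/flattenP; exists [seq (c.1 ++ bo.1, bo.2) | bo <- net_branches N c.2].
  exact: (map_f (fun co => [seq (co.1 ++ bo.1, bo.2) | bo <- net_branches N co.2])).
exact: (map_f (fun bo => (c.1 ++ bo.1, bo.2))).
Qed.

Definition branch_output (co : seq aff * seq aff) : aff := head (0, 0) co.2.

Lemma net_eval_branch t N co : co \in net_branches N [:: (1, 0)] ->
  nonneg_at t co.1 -> net_eval N t = aff_eval t (branch_output co).
Proof.
move=> coin co_t; rewrite /net_eval.
have -> : [:: t] = map (aff_eval t) [:: (1, 0)].
  by rewrite /= /aff_eval rmorph1 rmorph0 mul1r addr0.
rewrite (net_branches_sound coin co_t) /branch_output.
by case: co.2 => [|g s] //=; rewrite aff_eval0.
Qed.

End Branches.

(** * Candidate minimizers *)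

Definition branch_roots (N : relu_net) : seq rat :=
  flatten [seq [seq aff_root g | g <- co.1 & g.1 != 0]
          | co <- net_branches N [:: (1, 0)]].

Definition candidates (N : relu_net) (a b : rat) : seq rat :=
  [seq c <- a :: b :: branch_roots N | a <= c <= b].

Lemma exists_candidate_le (R : realType) N a b (s : R) : ratr a <= s <= ratr b ->
  exists2 c, c \in candidates N a b & net_eval N (ratr c) <= net_eval N s.
Proof.
move=> s_ab; have [co coin co_s] := net_branches_complete s N [:: (1, 0)].
have [c c_end [c_ab co_c c_le]] := aff_eval_end_le (branch_output co) s_ab co_s.
exists c; last by rewrite (net_eval_branch coin co_c) (net_eval_branch coin co_s).
have roots_sub : {subset [seq aff_root g | g <- co.1 & g.1 != 0] <= branch_roots N}.
  move=> r r_in; apply/flattenP; eexists; last exact: r_in.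
  exact: (map_f (fun co => [seq aff_root g | g <- co.1 & g.1 != 0])).
rewrite mem_filter c_ab /=; move: c_end; rewrite !inE => /orP [] /eqP ->.
  have := lower_end_mem a co.1; rewrite inE => /predU1P [-> | /roots_sub ->].
    by rewrite eqxx.
  by rewrite !orbT.
have := upper_end_mem b co.1; rewrite inE => /predU1P [-> | /roots_sub ->].
  by rewrite eqxx orbT.
by rewrite !orbT.
Qed.


(** * Coefficient bounds *)

Definition layer_params (L : layer) : seq rat := flatten L.1 ++ L.2.

Definition den_prod (s : seq rat) : rat := \prod_(p <- s) (denq p)%:~R.

Definition weight_prod (s : seq rat) : rat := \prod_(p <- s) (1 + `|p|).

Definition aff_bounded (D B : rat) (f : aff) : bool :=
  [&& f.1 * D \is a Num.int, f.2 * D \is a Num.int, `|f.1| <= B & `|f.2| <= B].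

Lemma den_prod_int s : den_prod s \is a Num.int.
Proof. by apply: rpred_prod => p _; apply: intr_int. Qed.

Lemma den_prod_ge1 s : 1 <= den_prod s.
Proof.
by apply: prodr_ge1 => p; rewrite ler1z -gtz0_ge1 denq_gt0.
Qed.

Lemma mul_den_prod_int p s : p \in s -> p * den_prod s \is a Num.int.
Proof.
move=> ps; rewrite /den_prod (big_rem p ps) /= mulrA -numqE.
by rewrite rpredM ?intr_int ?den_prod_int.
Qed.

Lemma weight_prod_ge1 s : 1 <= weight_prod s.
Proof. by apply: prodr_ge1 => p; rewrite lerDl. Qed.

Lemma sum_norm_le_weight_prod s : 1 + \sum_(p <- s) `|p| <= weight_prod s.
Proof.
elim: s => [|p s IH]; first by rewrite /weight_prod !big_nil addr0.
rewrite /weight_prod !big_cons -/(weight_prod s).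
have S0 : 0 <= \sum_(q <- s) `|q| by apply: sumr_ge0.
apply: le_trans (_ : (1 + `|p|) * (1 + \sum_(q <- s) `|q|) <= _).
  by have := normr_ge0 p; nra.
by rewrite ler_wpM2l // addr_ge0.
Qed.

Lemma row_bias_norm_le L row b : (row, b) \in zip L.1 L.2 ->
  \sum_(w <- row) `|w| + `|b| <= \sum_(p <- layer_params L) `|p|.
Proof.
case/mem_zip => rowL bL; rewrite /layer_params big_cat /= big_flatten /=.
have le_sum (I : eqType) (s : seq I) i (F : I -> rat) :
    i \in s -> (forall j, 0 <= F j) -> F i <= \sum_(j <- s) F j.
  by move=> i_s F0; rewrite (big_rem i i_s) /= lerDl sumr_ge0.
apply: lerD; last exact: le_sum.
by apply: (le_sum _ _ _ (fun r => \sum_(w <- r) `|w|)) => // r; apply: sumr_ge0.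
Qed.

Section AffBounded.

Variables D B : rat.

Lemma aff_bounded0 : 0 <= B -> aff_bounded D B (0, 0).
Proof. by move=> B0; rewrite /aff_bounded /= mul0r rpred0 normr0 B0. Qed.

Lemma aff_boundedN f : aff_bounded D B f -> aff_bounded D B (aff_opp f).
Proof. by rewrite /aff_bounded /= !normrN !mulNr !rpredN. Qed.

Lemma aff_bounded_weaken k B' f : aff_bounded D B f -> k \is a Num.int -> B <= B' ->
  aff_bounded (D * k) B' f.
Proof.
case/and4P => f1 f2 f1B f2B kint BB'; rewrite /aff_bounded !mulrA.
apply/and4P; split; [exact: rpredM f1 kint|exact: rpredM f2 kint|..].
  exact: le_trans f1B BB'.
exact: le_trans f2B BB'.
Qed.

Lemma aff_bounded_nth h j : 0 <= B -> all (aff_bounded D B) h ->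
  aff_bounded D B (nth (0, 0) h j).
Proof.
move=> B0 /allP hB; have [jh|hj] := ltnP j (size h); first by rewrite hB ?mem_nth.
by rewrite nth_default // aff_bounded0.
Qed.

Lemma norm_row_sum_le (G : aff -> rat) row h : 0 <= B -> all (aff_bounded D B) h ->
  (forall f, aff_bounded D B f -> `|G f| <= B) ->
  `|\sum_(j < size row) nth 0 row j * G (nth (0, 0) h j)| <= B * \sum_(w <- row) `|w|.
Proof.
move=> B0 hB GB; rewrite (big_nth 0) big_mkord mulr_sumr.
apply: le_trans (ler_norm_sum _ _ _) _; apply: ler_sum => j _.
by rewrite normrM mulrC ler_wpM2r // GB // aff_bounded_nth.
Qed.

End AffBounded.

Lemma preact_bounded D B L row b h : D \is a Num.int -> 1 <= B ->
  all (aff_bounded D B) h -> (row, b) \in zip L.1 L.2 ->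
  aff_bounded (D * den_prod (layer_params L)) (B * weight_prod (layer_params L))
    (preact row b h).
Proof.
move=> Dint B1 hB rb_in; have B0 : 0 <= B := le_trans ler01 B1.
set P := layer_params L; have [rowL bL] := mem_zip rb_in.
have rowP j : (j < size row)%N -> nth 0 row j \in P.
  by move=> j_lt; rewrite mem_cat; apply/orP; left; apply/flattenP; exists row; rewrite ?mem_nth.
have term_int (c : rat) (j : 'I_(size row)) : c * D \is a Num.int ->
    nth 0 row j * c * (D * den_prod P) \is a Num.int.
  have -> : nth 0 row j * c * (D * den_prod P) = nth 0 row j * den_prod P * (c * D) by ring.
  by move=> cD; rewrite rpredM ?mul_den_prod_int ?rowP.
have rb_W : \sum_(w <- row) `|w| + `|b| <= weight_prod P.
  apply: le_trans (row_bias_norm_le rb_in) _.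
  by apply: le_trans (sum_norm_le_weight_prod P); rewrite lerDr.
apply/and4P; split => /=.
- rewrite mulr_suml; apply: rpred_sum => j _.
  by case/and4P: (aff_bounded_nth j B0 hB) => ? _ _ _; apply: term_int.
- rewrite mulrDl mulr_suml rpredD //.
    apply: rpred_sum => j _.
    by case/and4P: (aff_bounded_nth j B0 hB) => _ ? _ _; apply: term_int.
  by rewrite mulrCA rpredM ?mul_den_prod_int // mem_cat bL orbT.
- apply: le_trans (@norm_row_sum_le D B (fun f => f.1) row h B0 hB _) _.
    by move=> f /and4P [].
  by rewrite ler_wpM2l // (le_trans _ rb_W) // lerDl.
- apply: le_trans (ler_normD _ _) _.
  apply: le_trans (lerD (@norm_row_sum_le D B (fun f => f.2) row h B0 hB _) (lexx `|b|)) _.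
    by move=> f /and4P [].
  apply: le_trans (_ : B * (\sum_(w <- row) `|w| + `|b|) <= _); last exact: ler_wpM2l.
  by rewrite mulrDr lerD2l ler_peMl.
Qed.

Lemma act_patterns_bounded D B zs co : 0 <= B -> all (aff_bounded D B) zs ->
  co \in act_patterns zs -> all (aff_bounded D B) (co.1 ++ co.2).
Proof.
move=> B0; elim: zs co => [|z zs IH] co /=; first by move=> _; rewrite inE => /eqP ->.
case/andP => zB zsB; rewrite mem_cat => /orP [] /mapP [c cin ->] /=;
  have := IH c zsB cin; rewrite !all_cat /= => /andP [c1B c2B].
  by rewrite zB c1B c2B.
by rewrite aff_boundedN // c1B aff_bounded0 // c2B.
Qed.

Lemma net_branches_bounded N D B h co : D \is a Num.int -> 1 <= B ->
  all (aff_bounded D B) h -> co \in net_branches N h ->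
  all (aff_bounded (D * den_prod (params N)) (B * weight_prod (params N))) (co.1 ++ co.2).
Proof.
elim: N D B h co => [|L N IH] D B h co Dint B1 hB /=.
  by rewrite inE => /eqP ->; rewrite /den_prod /weight_prod !big_nil !mulr1.
case/flattenP => s /mapP [c cin ->] /mapP [b bin ->] /=.
set P := layer_params L.
have B'1 : 1 <= B * weight_prod P by rewrite mulr_ege1 ?weight_prod_ge1.
have preB : all (aff_bounded (D * den_prod P) (B * weight_prod P)) (layer_preacts L h).
  by apply/allP => z /mapP [[row bb] rb_in ->]; apply: preact_bounded.
have := act_patterns_bounded (le_trans ler01 B'1) preB cin.
rewrite all_cat => /andP [c1B c2B].
have := IH _ _ _ _ (rpredM Dint (den_prod_int _)) B'1 c2B bin.
rewrite /den_prod /weight_prod => bB.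
have -> : params (L :: N) = P ++ params N by [].
rewrite !(big_cat _ P) !mulrA -catA all_cat bB andbT.
apply/allP => f f_in; apply: aff_bounded_weaken (allP c1B f f_in) (den_prod_int _) _.
by rewrite ler_peMr ?weight_prod_ge1 // (le_trans ler01).
Qed.

(** * Bit lengths *)

Definition frac_bounded (T r : rat) := exists U V : rat,
  [/\ U \is a Num.int, V \is a Num.int, V != 0, r = U / V & `|U| <= T /\ `|V| <= T].

Lemma bitlen_nat_le n k : (n <= 2 ^ k)%N -> (bitlen_nat n <= k.+1)%N.
Proof.
move=> nk; rewrite /bitlen_nat ltnS.
case: n nk => [|n] nk; first by rewrite trunc_log0.
have := trunc_logP (isT : (1 < 2)%N) (isT : (0 < n.+1)%N).
by move/leq_trans/(_ nk); rewrite leq_exp2l.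
Qed.

Lemma ltn_exp2_bitlen n k : (bitlen_nat n <= k)%N -> (n < 2 ^ k)%N.
Proof.
by move=> nk; apply: leq_trans (trunc_log_ltn _ (isT : (1 < 2)%N)) _; rewrite leq_exp2l.
Qed.

Lemma bitlen_rat_frac_bounded k r : frac_bounded (2 ^+ k) r -> (bitlen_rat r <= (k.+1).*2)%N.
Proof.
case=> U [V [Uint Vint V0 -> [UB VB]]].
rewrite -(numqK Uint) -(numqK Vint) in UB VB V0 *.
have le_exp (n : nat) : (n%:R : rat) <= 2 ^+ k -> (n <= 2 ^ k)%N by rewrite -natrX ler_nat.
move: UB VB V0; rewrite -!intr_norm -!natr_absz; move: (numq U) (numq V) => u v.
move=> /le_exp uB /le_exp vB v0; move: uB vB v0.
case: divqP => [|c y c0] uB vB v0; first by move: v0; rewrite eqxx.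
rewrite /bitlen_rat -addnn; apply: leq_add; apply: bitlen_nat_le.
  by apply: leq_trans uB; rewrite abszM leq_pmull // absz_gt0.
by apply: leq_trans vB; rewrite abszM leq_pmull // absz_gt0.
Qed.

Lemma bitlen_rat_bounds p d : (bitlen_rat p <= d)%N ->
  (denq p)%:~R <= (2 : rat) ^+ d /\ 1 + `|p| <= (2 : rat) ^+ d.
Proof.
rewrite /bitlen_rat => pd.
have /ltn_exp2_bitlen num_lt : (bitlen_nat `|numq p| <= d)%N.
  by apply: leq_trans pd; rewrite leq_addr.
have /ltn_exp2_bitlen den_lt : (bitlen_nat `|denq p| <= d)%N.
  by apply: leq_trans pd; rewrite leq_addl.
split.
  rewrite -[denq p]gez0_abs ?(ltW (denq_gt0 p)) // -natr_absz -natrX ler_nat.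
  exact: ltnW.
apply: le_trans (_ : (`|numq p|.+1)%:R <= _); last by rewrite -natrX ler_nat.
rewrite -natr1 addrC lerD2r natr_absz intr_norm numqE normrM.
by rewrite ler_peMr // -intr_norm ler1z gtr0_norm ?denq_gt0 // -gtz0_ge1 denq_gt0.
Qed.

Section FracBounded.

Variable K : rat.
Hypothesis K2 : 2 <= K.

Let K0 : 0 <= K. Proof. exact: le_trans K2. Qed.
Let K1 : 1 <= K. Proof. by apply: le_trans K2; rewrite ler1n. Qed.

Lemma frac_bounded_add (x y : rat) :
  (denq x)%:~R <= K -> `|x| <= K -> (denq y)%:~R <= K -> `|y| <= K ->
  frac_bounded (K ^+ 4) (x + y).
Proof.
move=> dxK xK dyK yK; set dx : rat := (denq x)%:~R; set dy : rat := (denq y)%:~R.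
have dx0 : 0 < dx by rewrite ltr0z denq_gt0.
have dy0 : 0 < dy by rewrite ltr0z denq_gt0.
exists ((x + y) * dx * dy), (dx * dy); split.
- by rewrite mulrDl mulrDl -numqE mulrAC -numqE rpredD // rpredM ?intr_int.
- by rewrite rpredM ?intr_int.
- by rewrite mulf_neq0 // gt_eqF.
- by field; rewrite !gt_eqF.
have xyK : `|x + y| <= K * K.
  apply: le_trans (ler_normD _ _) _; apply: le_trans (lerD xK yK) _.
  by rewrite -mulr2n -mulr_natr ler_wpM2l.
rewrite !normrM (gtr0_norm dx0) (gtr0_norm dy0); split.
  have -> : K ^+ 4 = K * K * K * K by rewrite !exprS expr0 mulr1 !mulrA.
  by rewrite !ler_pM ?mulr_ge0 // ltW.
apply: le_trans (ler_weXn2l K1 (isT : (2 <= 4)%N)).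
by rewrite expr2 ler_pM // ltW.
Qed.

Variables D B : rat.
Hypotheses (Dint : D \is a Num.int) (D1 : 1 <= D) (DK : D <= K) (BK : B <= K).

Let D0 : D != 0. Proof. by rewrite gt_eqF // (lt_le_trans ltr01). Qed.

Lemma frac_bounded_root f : aff_bounded D B f -> f.1 != 0 ->
  frac_bounded (K ^+ 2) (aff_root f).
Proof.
case/and4P => f1D f2D f1B f2B f0.
exists (- (f.2 * D)), (f.1 * D); split; rewrite ?rpredN ?mulf_neq0 //.
  by rewrite /aff_root; field; rewrite f0 D0.
have le_K2 z : `|z| <= B -> `|z * D| <= K ^+ 2.
  move=> zB; rewrite normrM (ger0_norm (le_trans ler01 D1)) expr2.
  by rewrite ler_pM ?(le_trans zB) // (le_trans ler01).
by rewrite normrN !le_K2.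
Qed.

Lemma frac_bounded_aff T c f : aff_bounded D B f -> frac_bounded T c ->
  frac_bounded (K ^+ 3 * T) (f.1 * c + f.2).
Proof.
case/and4P => f1D f2D f1B f2B [U [V [Uint Vint V0 -> [UT VT]]]].
have T0 : 0 <= T by apply: le_trans VT.
have B0 : 0 <= B by apply: le_trans (normr_ge0 _) f1B.
have D0' : 0 <= D by apply: le_trans D1.
exists (f.1 * D * U + f.2 * D * V), (D * V); split.
- by rewrite rpredD // rpredM.
- by rewrite rpredM.
- by rewrite mulf_neq0.
- by field; rewrite D0 V0.
have -> : K ^+ 3 * T = K * K * (K * T) by rewrite !exprS expr0 mulr1 !mulrA.
rewrite normrM (ger0_norm D0'); split; last first.
  by rewrite ler_pM ?mulr_ge0 // ?(le_trans DK) ?ler_peMr // (le_trans VT) ?ler_peMl.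
apply: le_trans (ler_normD _ _) _; rewrite !normrM (ger0_norm D0').
apply: le_trans (_ : B * K * T + B * K * T <= _).
  by rewrite lerD // !ler_pM ?mulr_ge0.
have -> : B * K * T + B * K * T = (B * 2) * (K * T) by ring.
by rewrite ler_pM ?mulr_ge0 // ler_pM.
Qed.

End FracBounded.

Lemma frac_bounded_le T T' r : T <= T' -> frac_bounded T r -> frac_bounded T' r.
Proof.
move=> TT' [U [V [Uint Vint V0 rE [UT VT]]]]; exists U, V.
by split => //; split; apply: le_trans TT'.
Qed.

(** * Size of the minimum *)

Lemma wf_from_params_gt0 n N : N != [::] -> wf_from n N -> (0 < num_params N)%N.
Proof.
elim: N n => [|L N IH] n // _ /= /andP [_ wfN].
rewrite /num_params /params /= size_cat -/(params N) addn_gt0.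
case: N IH wfN => [|L' N'] IH wfN; last by rewrite (IH _ isT wfN) orbT.
by move: wfN => /= /eqP L2; rewrite size_cat L2 addn1.
Qed.

Lemma bitlen_le_max_bits N x eps p : p \in x :: eps :: params N ->
  (bitlen_rat p <= max_bits N x eps)%N.
Proof. by move=> p_in; apply: (@leq_bigmax_seq _ _ xpredT bitlen_rat p p_in). Qed.

Section MinimumBitLength.

Variables (N : relu_net) (x eps : rat).
Hypothesis wfN : wf_net N.

Local Notation K := ((2 : rat) ^+ (num_params N * max_bits N x eps)).

Lemma num_params_gt0 : (0 < num_params N)%N.
Proof. by case/andP: wfN => N0; apply: wf_from_params_gt0. Qed.

Lemma max_bits_gt0 : (0 < max_bits N x eps)%N.
Proof.
by apply: leq_trans (bitlen_le_max_bits (mem_head x _)); rewrite /bitlen_rat addn_gt0.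
Qed.

Lemma exp2_max_bits_le : 2 ^+ max_bits N x eps <= K.
Proof. by rewrite ler_weXn2l ?ler1n // leq_pmull ?num_params_gt0. Qed.

Lemma two_le_K : 2 <= K.
Proof.
by rewrite -[leLHS]expr1 ler_weXn2l ?ler1n // muln_gt0 num_params_gt0 max_bits_gt0.
Qed.

Lemma den_norm_le_K p : p \in x :: eps :: params N ->
  (denq p)%:~R <= K /\ `|p| <= K.
Proof.
move=> /bitlen_le_max_bits /bitlen_rat_bounds [denB normB].
split; first exact: le_trans denB exp2_max_bits_le.
by apply: le_trans exp2_max_bits_le; apply: le_trans normB; rewrite lerDr.
Qed.

Let param_bits p : p \in params N ->
  (denq p)%:~R <= (2 : rat) ^+ max_bits N x eps /\ 1 + `|p| <= 2 ^+ max_bits N x eps.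
Proof. by move=> p_in; apply/bitlen_rat_bounds/bitlen_le_max_bits; rewrite !inE p_in !orbT. Qed.

Lemma den_prod_params_le : den_prod (params N) <= K.
Proof.
rewrite mulnC exprM; apply: prodr_le_exp => p /param_bits [denB _].
by rewrite denB ler0z ltW ?denq_gt0.
Qed.

Lemma weight_prod_params_le : weight_prod (params N) <= K.
Proof.
rewrite mulnC exprM; apply: prodr_le_exp => p /param_bits [_ normB].
by rewrite normB addr_ge0.
Qed.

Lemma net_branches_params_bounded co : co \in net_branches N [:: (1, 0)] ->
  all (aff_bounded (den_prod (params N)) (weight_prod (params N))) (co.1 ++ co.2).
Proof.
move=> co_in; have inB : all (aff_bounded 1 1) [:: (1, 0)] by rewrite /= /aff_bounded.
by have := net_branches_bounded (rpred1 _) (lexx 1) inB co_in; rewrite !mul1r.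
Qed.

Lemma candidate_frac_bounded c : c \in candidates N (x - eps) (x + eps) ->
  frac_bounded (K ^+ 4) c.
Proof.
have [dxK xK] := den_norm_le_K (mem_head x _).
have [deK eK] : (denq eps)%:~R <= K /\ `|eps| <= K.
  by apply: den_norm_le_K; rewrite !inE eqxx orbT.
rewrite mem_filter => /andP [_]; rewrite !inE => /or3P [/eqP -> | /eqP -> | ].
- by apply: frac_bounded_add; rewrite ?denqN ?normrN ?two_le_K.
- by apply: frac_bounded_add; rewrite ?two_le_K.
case/flattenP => _ /mapP [co co_in ->] /mapP [g]; rewrite mem_filter => /andP [g0 g_in] ->.
have K1 : 1 <= K by apply: le_trans two_le_K; rewrite ler1n.
apply: frac_bounded_le (ler_weXn2l K1 (isT : (2 <= 4)%N)) _.
apply: (frac_bounded_root (den_prod_ge1 _) den_prod_params_le weight_prod_params_le _ g0).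
by apply: (allP (net_branches_params_bounded co_in)); rewrite mem_cat g_in.
Qed.

Lemma net_eval_frac_bounded (R : realType) c : frac_bounded (K ^+ 4) c ->
  exists q, net_eval N (ratr c : R) = ratr q /\ frac_bounded (K ^+ 7) q.
Proof.
move=> cB; have [co co_in co_c] := net_branches_complete (ratr c : R) N [:: (1, 0)].
have fB : aff_bounded (den_prod (params N)) (weight_prod (params N)) (branch_output co).
  move: (net_branches_params_bounded co_in); rewrite all_cat /branch_output => /andP [_].
  case: co.2 => [|f s] /=; last by case/andP.
  by rewrite aff_bounded0 // (le_trans ler01) ?weight_prod_ge1.
exists ((branch_output co).1 * c + (branch_output co).2); split.
  by rewrite (net_eval_branch co_in co_c) /aff_eval rmorphD rmorphM.
rewrite (_ : 7%N = 3 + 4)%N // exprD.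
exact: (frac_bounded_aff two_le_K (den_prod_int _) (den_prod_ge1 _) den_prod_params_le
  weight_prod_params_le fB cB).
Qed.

End MinimumBitLength.

Theorem lemma11 :
  exists C : nat,
  forall (R : realType) (N : relu_net) (x eps : rat),
    wf_net N -> 0 <= eps ->
    exists (t : R) (q : rat),
      [/\ ratr (x - eps) <= t <= ratr (x + eps),
          net_eval N t = ratr q,
          (forall s : R, ratr (x - eps) <= s <= ratr (x + eps) ->
             net_eval N t <= net_eval N s)
        & (bitlen_rat q <= C * num_params N * max_bits N x eps)%N].
Proof.
exists 16%N => R N x eps wfN eps0.
have x_in : x - eps \in candidates N (x - eps) (x + eps).
  by rewrite mem_filter lexx mem_head andbT; lra.
have cands0 : candidates N (x - eps) (x + eps) != [::].
  by apply: contraTneq x_in => ->.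
have [c c_in c_min] := seq_argmin (fun c => net_eval N (ratr c : R)) cands0.
have [q [qE qB]] := net_eval_frac_bounded wfN R (candidate_frac_bounded wfN c_in).
exists (ratr c), q; split => //.
- by move: c_in; rewrite mem_filter !ler_rat => /andP [].
- move=> s /(exists_candidate_le N) [c' c'_in c'_le].
  exact: le_trans (c_min c' c'_in) c'_le.
rewrite -exprM in qB; apply: leq_trans (bitlen_rat_frac_bounded qB) _.
have := num_params_gt0 wfN; have := max_bits_gt0 N x eps; nia.
Qed.
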